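(* Let $\gamma>0$, $y>0$, $x_1\ge0$, $\sigma\ge0$ be real with $y+4x_1+\sigma/\gamma<1$, and assume (C1) $\sigma/\gamma\le y/(q-1)$; (C2) $2x_1(y+\sigma/\gamma+2x_1)^2<(1-y-\sigma/\gamma-4x_1)^2(y+\sigma/\gamma)$; (C3) $\frac\sigma\gamma(1-y)<y^2$. Then $$I_{y,x_1}(\sigma)=S(\sigma,y,0,2x_1)=E(2x_1)+(1-2x_1)E\Bigl(\frac{y+2x_1}{1-2x_1}\Bigr)+\Bigl(y+\frac\sigma\gamma+2x_1\Bigr)E\Bigl(\frac{y+2x_1}{y+\sigma/\gamma+2x_1}\Bigr).$$
   Context: $E(x)=-x\log_qx-(1-x)\log_q(1-x)$ for $0<x<1$, $E(0)=E(1)=0$. $S(\sigma,y,x,t_1)=E(t_1)+(1-t_1)E\bigl(\frac{y+x+t_1}{1-t_1}\bigr)+Z$, where $Z=(y+\sigma/\gamma+t_1)E\bigl(\frac{y+x+t_1}{y+\sigma/\gamma+t_1}\bigr)$ if $\frac{y+x+t_1}{y+\sigma/\gamma+t_1}\ge1-\frac1q$ and $Z=(y+\sigma/\gamma+t_1)-(y+x+t_1)\log_q(q-1)$ otherwise. $I_{y,x_1}(\sigma)=\max S(\sigma,y,x,t_1)$ over real $0\le t_1\le2x_1$, $0\le x\le\sigma/\gamma$. *)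

From Stdlib Require Import Reals Lra.
Open Scope R_scope.

Definition logq (q : R) (x : R) : R := ln x / ln q.

(* q-ary entropy; E(0)=E(1)=0; only used on [0,1] (value 0 outside (0,1)
   is an arbitrary convention, never reached under the hypotheses). *)
Definition Eq (q x : R) : R :=
  if Rlt_dec 0 x then
    if Rlt_dec x 1 then - x * logq q x - (1 - x) * logq q (1 - x) else 0
  else 0.

Definition Zq (q gamma sigma y x t1 : R) : R :=
  let a := y + x + t1 in
  let b := y + sigma / gamma + t1 in
  if Rle_dec (1 - 1 / q) (a / b) then b * Eq q (a / b)
  else b - a * logq q (q - 1).

Definition Sq (q gamma sigma y x t1 : R) : R :=
  Eq q t1 + (1 - t1) * Eq q ((y + x + t1) / (1 - t1)) + Zq q gamma sigma y x t1.

Definition feasible (gamma sigma x1 x t1 : R) : Prop :=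
  0 <= t1 <= 2 * x1 /\ 0 <= x <= sigma / gamma.

(* "v = I_{y,x1}(sigma) = max S over the feasible region" : v is attained and
   is an upper bound of S on the region. *)
Definition is_I (q gamma sigma y x1 v : R) : Prop :=
  (exists x t1, feasible gamma sigma x1 x t1 /\ Sq q gamma sigma y x t1 = v) /\
  (forall x t1, feasible gamma sigma x1 x t1 -> Sq q gamma sigma y x t1 <= v).

From Stdlib Require Import Reals Lra Psatz.
Open Scope R_scope.

(* Write phi z = - z ln z ([negxlnx]) and s = sigma/gamma.  By (C1), Z stays on its
   entropy branch over the whole feasible region, where S ln q becomes the
   combination [S_nats] of values of phi.  Bounding each term by a tangent line
   of the concave phi, (S ln q)(x, t) exceeds (S ln q)(0, t) by at most
   x ln ((1-y-2t) s / (y+t)^2) <= 0, using (C3), and (S ln q)(0, t) falls short of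
   (S ln q)(0, 2x1) by at least (2x1 - t) ln ((1-y-4x1)^2 (y+s+t) / (2x1 (y+2x1)^2))
   >= 0, using (C2).  So the maximum is attained at x = 0, t = 2x1. *)

Definition negxlnx (z : R) : R := if Rlt_dec 0 z then - z * ln z else 0.

Lemma negxlnx_pos (z : R) : 0 < z -> negxlnx z = - z * ln z.
Proof. intro Hz; unfold negxlnx; destruct (Rlt_dec 0 z); lra. Qed.

Lemma negxlnx_0 : negxlnx 0 = 0.
Proof. unfold negxlnx; destruct (Rlt_dec 0 0); lra. Qed.

Lemma negxlnx_1 : negxlnx 1 = 0.
Proof. rewrite negxlnx_pos, ln_1; lra. Qed.

Lemma Rdiv_nonneg (a b : R) : 0 <= a -> 0 < b -> 0 <= a / b.
Proof. intros Ha Hb; apply Rmult_le_pos; [| left; apply Rinv_0_lt_compat]; lra. Qed.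

Lemma ln_le_sub_1 (u : R) : 0 < u -> ln u <= u - 1.
Proof. intro Hu; pose proof (exp_ineq1_le (ln u)); rewrite exp_ln in *; lra. Qed.

Lemma ln_le (a b : R) : 0 < a -> a <= b -> ln a <= ln b.
Proof.
  intros Ha [Hab | <-]; [left; apply ln_increasing |]; lra.
Qed.

Lemma ln_sq (a : R) : 0 < a -> ln (a ^ 2) = 2 * ln a.
Proof. intro Ha; rewrite ln_pow by exact Ha; simpl; ring. Qed.

Lemma negxlnx_tangent (z z' : R) :
  0 < z -> 0 <= z' -> negxlnx z' <= negxlnx z - (ln z + 1) * (z' - z).
Proof.
  intros Hz [Hz' | <-].
  - rewrite !negxlnx_pos by lra.
    assert (Hratio : ln z - ln z' <= z / z' - 1).
    { replace (ln z - ln z') with (ln (z / z')).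
      - apply ln_le_sub_1, Rdiv_lt_0_compat; lra.
      - unfold Rdiv; rewrite ln_mult, ln_Rinv by (try apply Rinv_0_lt_compat; lra); ring. }
    assert (Hscaled : z' * (ln z - ln z') <= z - z').
    { replace (z - z') with (z' * (z / z' - 1)) by (field; lra).
      apply Rmult_le_compat_l; lra. }
    lra.
  - rewrite negxlnx_0, negxlnx_pos by lra; lra.
Qed.

Lemma negxlnx_div (b c : R) :
  0 < b -> 0 <= c -> b * negxlnx (c / b) = negxlnx c + c * ln b.
Proof.
  intros Hb [Hc | <-].
  - rewrite !negxlnx_pos by (try apply Rdiv_lt_0_compat; lra).
    unfold Rdiv; rewrite ln_mult, ln_Rinv by (try apply Rinv_0_lt_compat; lra).
    field; lra.
  - unfold Rdiv; rewrite Rmult_0_l, negxlnx_0; lra.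
Qed.

Lemma Eq_mul_ln (q p : R) :
  1 < q -> 0 <= p <= 1 -> Eq q p * ln q = negxlnx p + negxlnx (1 - p).
Proof.
  intros Hq [Hp0 Hp1].
  assert (Hlnq : 0 < ln q) by (rewrite <- ln_1; apply ln_increasing; lra).
  unfold Eq, logq.
  destruct (Rlt_dec 0 p); [destruct (Rlt_dec p 1) |].
  - rewrite !negxlnx_pos by lra; field; lra.
  - replace p with 1 by lra; rewrite Rminus_diag, negxlnx_0, negxlnx_1; lra.
  - replace p with 0 by lra; rewrite Rminus_0_r, negxlnx_0, negxlnx_1; lra.
Qed.

Lemma Eq_div_mul_ln (q a b : R) :
  1 < q -> 0 < b -> 0 <= a <= b ->
  b * Eq q (a / b) * ln q = negxlnx a + negxlnx (b - a) - negxlnx b.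
Proof.
  intros Hq Hb Ha.
  assert (Hab : 0 <= a / b <= 1).
  { split; [apply Rdiv_nonneg; lra |].
    apply (Rmult_le_reg_r b); [lra |]; unfold Rdiv; rewrite Rmult_assoc, Rinv_l; lra. }
  rewrite Rmult_assoc, Eq_mul_ln by assumption.
  replace (1 - a / b) with ((b - a) / b) by (field; lra).
  rewrite Rmult_plus_distr_l, !negxlnx_div, (negxlnx_pos b) by lra.
  ring.
Qed.

Lemma Zq_entropy_branch (q gamma sigma y x t : R) :
  1 < q -> 0 < y -> 0 <= x -> 0 <= t -> 0 <= sigma / gamma ->
  (q - 1) * (sigma / gamma) <= y ->
  Zq q gamma sigma y x t
  = (y + sigma / gamma + t) * Eq q ((y + x + t) / (y + sigma / gamma + t)).
Proof.
  intros Hq Hy Hx Ht Hs Hc.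
  unfold Zq; cbv zeta; set (s := sigma / gamma) in *.
  destruct (Rle_dec (1 - 1 / q) ((y + x + t) / (y + s + t))) as [_ | Hbranch];
    [reflexivity | exfalso; apply Hbranch].
  apply (Rmult_le_reg_r (q * (y + s + t))); [nra |].
  replace ((1 - 1 / q) * (q * (y + s + t))) with ((q - 1) * (y + s + t)) by (field; lra).
  replace ((y + x + t) / (y + s + t) * (q * (y + s + t))) with (q * (y + x + t))
    by (field; lra).
  nra.
Qed.

Definition S_nats (y s x t : R) : R :=
  negxlnx t + 2 * negxlnx (y + x + t) + negxlnx (1 - y - x - 2 * t)
  + negxlnx (s - x) - negxlnx (y + s + t).

Lemma Sq_mul_ln (q gamma sigma y x t : R) :
  1 < q -> 0 < y -> 0 <= x <= sigma / gamma -> 0 <= t -> y + x + 2 * t < 1 ->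
  (q - 1) * (sigma / gamma) <= y ->
  Sq q gamma sigma y x t * ln q = S_nats y (sigma / gamma) x t.
Proof.
  intros Hq Hy Hx Ht Hsum Hc.
  unfold Sq, S_nats; rewrite Zq_entropy_branch by lra.
  set (s := sigma / gamma) in *.
  pose proof (Eq_mul_ln q t Hq ltac:(lra)) as Ht_ln.
  pose proof (Eq_div_mul_ln q (y + x + t) (1 - t) Hq ltac:(lra) ltac:(lra)) as Hrest_ln.
  pose proof (Eq_div_mul_ln q (y + x + t) (y + s + t) Hq ltac:(lra) ltac:(lra)) as HZ_ln.
  replace (1 - t - (y + x + t)) with (1 - y - x - 2 * t) in Hrest_ln by ring.
  replace (y + s + t - (y + x + t)) with (s - x) in HZ_ln by ring.
  lra.
Qed.

Lemma S_nats_le_x0 (y s x t : R) :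
  0 < y -> 0 <= x <= s -> 0 <= t -> y + s + 2 * t < 1 -> s * (1 - y) <= y ^ 2 ->
  S_nats y s x t <= S_nats y s 0 t.
Proof.
  intros Hy Hx Ht Hsum C3.
  destruct (Req_dec x 0) as [-> | Hx0]; [lra |].
  assert (Hslope : ln (1 - y - 2 * t) + ln s - 2 * ln (y + t) <= 0).
  { assert (Hprod : (1 - y - 2 * t) * s <= (y + t) ^ 2) by nra.
    apply ln_le in Hprod; [| apply Rmult_lt_0_compat; lra].
    rewrite ln_mult, ln_sq in Hprod by lra.
    lra. }
  pose proof (negxlnx_tangent (y + t) (y + x + t) ltac:(lra) ltac:(lra)).
  pose proof (negxlnx_tangent (1 - y - 2 * t) (1 - y - x - 2 * t) ltac:(lra) ltac:(lra)).
  pose proof (negxlnx_tangent s (s - x) ltac:(lra) ltac:(lra)).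
  assert (x * (ln (1 - y - 2 * t) + ln s - 2 * ln (y + t)) <= 0) by nra.
  unfold S_nats; rewrite Rplus_0_r, !Rminus_0_r.
  lra.
Qed.

Lemma S_nats_le_tmax (y s t T : R) :
  0 < y -> 0 <= s -> 0 <= t <= T -> y + s + 2 * T < 1 ->
  T * (y + s + T) ^ 2 <= (1 - y - s - 2 * T) ^ 2 * (y + s) ->
  S_nats y s 0 t <= S_nats y s 0 T.
Proof.
  intros Hy Hs Ht Hsum C2.
  destruct (Req_dec T 0) as [HT0 | HT0]; [replace t with T by lra; lra |].
  assert (Hprod : T * (y + T) ^ 2 <= (1 - y - 2 * T) ^ 2 * (y + s + t)).
  { apply Rle_trans with (T * (y + s + T) ^ 2);
      [apply Rmult_le_compat_l; [lra | apply pow_incr; lra] |].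
    apply (Rle_trans _ _ _ C2), Rmult_le_compat; [apply pow_le; lra | lra | | lra].
    apply pow_incr; lra. }
  assert (Hslope : ln T + 2 * ln (y + T) - 2 * ln (1 - y - 2 * T) - ln (y + s + t) <= 0).
  { apply ln_le in Hprod; [| apply Rmult_lt_0_compat; [| apply pow_lt]; lra].
    rewrite !ln_mult, !ln_sq in Hprod by (try apply pow_lt; lra).
    lra. }
  pose proof (negxlnx_tangent T t ltac:(lra) ltac:(lra)).
  pose proof (negxlnx_tangent (y + T) (y + t) ltac:(lra) ltac:(lra)).
  pose proof (negxlnx_tangent (1 - y - 2 * T) (1 - y - 2 * t) ltac:(lra) ltac:(lra)).
  (* the convex term - phi (y + s + .) is bounded below by its tangent at t *)
  pose proof (negxlnx_tangent (y + s + t) (y + s + T) ltac:(lra) ltac:(lra)).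
  assert ((T - t) * (ln T + 2 * ln (y + T) - 2 * ln (1 - y - 2 * T) - ln (y + s + t)) <= 0)
    by nra.
  unfold S_nats; rewrite !Rplus_0_r, !Rminus_0_r.
  lra.
Qed.

Theorem corollary4p9 (q : nat) (gamma y x1 sigma : R) :
  (2 <= q)%nat ->
  0 < gamma -> 0 < y -> 0 <= x1 -> 0 <= sigma ->
  y + 4 * x1 + sigma / gamma < 1 ->
  sigma / gamma <= y / (INR q - 1) ->
  2 * x1 * (y + sigma / gamma + 2 * x1) ^ 2
    < (1 - y - sigma / gamma - 4 * x1) ^ 2 * (y + sigma / gamma) ->
  sigma / gamma * (1 - y) < y ^ 2 ->
  is_I (INR q) gamma sigma y x1 (Sq (INR q) gamma sigma y 0 (2 * x1)) /\
  Sq (INR q) gamma sigma y 0 (2 * x1) =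
    Eq (INR q) (2 * x1) + (1 - 2 * x1) * Eq (INR q) ((y + 2 * x1) / (1 - 2 * x1))
    + (y + sigma / gamma + 2 * x1)
      * Eq (INR q) ((y + 2 * x1) / (y + sigma / gamma + 2 * x1)).
Proof.
  intros Hq Hgamma Hy Hx1 Hsigma Hsum C1 C2 C3.
  assert (HQ : 2 <= INR q) by (change 2 with (INR 2); apply le_INR; exact Hq).
  assert (Hlnq : 0 < ln (INR q)) by (rewrite <- ln_1; apply ln_increasing; lra).
  assert (Hs : 0 <= sigma / gamma) by (apply Rdiv_nonneg; lra).
  assert (Hc : (INR q - 1) * (sigma / gamma) <= y).
  { apply (Rmult_le_compat_l (INR q - 1)) in C1; [| lra].
    replace ((INR q - 1) * (y / (INR q - 1))) with y in C1 by (field; lra); exact C1. }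
  split; [split |].
  - exists 0, (2 * x1); split; [unfold feasible; lra | reflexivity].
  - intros x t [Ht Hx].
    apply (Rmult_le_reg_r _ _ _ Hlnq); rewrite !Sq_mul_ln by lra.
    apply Rle_trans with (S_nats y (sigma / gamma) 0 t);
      [apply S_nats_le_x0 | apply S_nats_le_tmax]; lra.
  - unfold Sq; rewrite Zq_entropy_branch, Rplus_0_r by lra; reflexivity.
Qed.
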